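(* Let $F$ be a field of characteristic $2$, let $i\le n$ be positive integers, let $X_1,\dots,X_{i-1},Y_i,\dots,Y_n,Z_i,\dots,Z_n$ be indeterminates, and let $K=F(X_1,\dots,X_{i-1},Y_i,\dots,Y_n,Z_i,\dots,Z_n)$. Then $$\mathfrak b:=\langle\langle X_1,\dots,X_{i-1}\rangle\rangle_b\otimes\big(\langle\langle Y_i,\dots,Y_n\rangle\rangle_b'\perp\langle\langle Z_i,\dots,Z_n\rangle\rangle_b'\big)$$ is an anisotropic symmetric bilinear form over $K$ of dimension $2^{n+1}-2^i$ with $[\mathfrak b]\in I^n(K)$.
   Context: $\langle\langle a_1,\dots,a_m\rangle\rangle_b=\langle1,a_1\rangle_b\otimes\cdots\otimes\langle1,a_m\rangle_b$ is the $m$-fold bilinear Pfister form, i.e. $\perp_{S\subseteq\{1,\dots,m\}}\langle\prod_{j\in S}a_j\rangle_b$; its pure part $\langle\langle a_1,\dots,a_m\rangle\rangle_b'$ (for $m\ge1$) is $\perp_{\emptyset\ne S\subseteq\{1,\dots,m\}}\langle\prod_{j\in S}a_j\rangle_b$, the complement of $\langle1\rangle_b$. $W(K)$ is the Witt ring of (non-degenerate) symmetric bilinear forms, $I(K)$ its fundamental ideal and $I^n(K)$ its $n$-th power; a form is anisotropic if $\mathfrak b(v,v)\ne0$ for $v\ne0$. *)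

From HB Require Import structures.
From mathcomp Require Import all_boot all_order all_algebra.
From mathcomp Require Import mpoly.
Set Implicit Arguments. Unset Strict Implicit. Unset Printing Implicit Defensive.
Import GRing.Theory.
Local Open Scope ring_scope.

(* A (possibly degenerate) bilinear form on K^d, given by its Gram matrix:
   b(u,v) = u *m A *m v^T for row vectors u v. *)
Record bform (K : fieldType) := BForm { bdim : nat; bmx : 'M[K]_bdim }.

Section Forms.
Variable K : fieldType.

Definition nondeg (b : bform K) : bool :=
  ((bmx b)^T == bmx b) && (\det (bmx b) != 0).

Definition bval (b : bform K) (u v : 'rV[K]_(bdim b)) : K :=
  (u *m bmx b *m v^T) 0 0.

Definition anisotropic (b : bform K) : Prop :=
  forall v : 'rV[K]_(bdim b), v != 0 -> bval v v != 0.

Definition bsum (b1 b2 : bform K) : bform K :=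
  @BForm K (bdim b1 + bdim b2) (block_mx (bmx b1) 0 0 (bmx b2)).

Definition isometric (b1 b2 : bform K) : Prop :=
  exists P : 'M[K]_(bdim b1, bdim b2),
    [/\ row_free P, row_full P & P^T *m bmx b1 *m P = bmx b2].

Definition metabolic (b : bform K) : Prop :=
  nondeg b /\ exists k, exists U : 'M[K]_(k, bdim b),
    [/\ k.*2 = bdim b, row_free U & U *m bmx b *m U^T = 0].

Definition witt_equiv (b1 b2 : bform K) : Prop :=
  exists m1 m2, metabolic m1 /\ metabolic m2 /\ isometric (bsum b1 m1) (bsum b2 m2).

Definition diagf (s : seq K) : bform K :=
  @BForm K (size s) (diag_mx (\row_(j < size s) s`_j)).

(* tensor product of diagonal forms: <a_i> (x) <b_j> = <a_i b_j> *)
Definition dtensor (s t : seq K) : seq K := [seq x * y | x <- s, y <- t].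

(* bilinear Pfister form <<a_1,...,a_m>>_b = <1,a_1> (x) ... (x) <1,a_m>;
   its first diagonal entry is the entry 1 of the empty subset *)
Definition pfister (a : seq K) : seq K := foldr (fun x p => dtensor [:: 1; x] p) [:: 1] a.

Definition pure_pfister (a : seq K) : seq K := behead (pfister a).

(* [b] \in I^n(K): the class of b is a finite sum of products of n
   elements of the fundamental ideal I(K) (classes of even-dimensional forms,
   represented by non-degenerate even-dimensional diagonal forms).
   In characteristic 2, [b] + [b] = 0, so the additive subgroup generated
   by such products is the set of such finite sums. *)
Definition in_In (n : nat) (b : bform K) : Prop :=
  exists fs : seq (seq (seq K)),
    (forall f, f \in fs -> size f = n /\
        forall g, g \in f -> ~~ odd (size g) /\ all (fun x => x != 0) g) /\
    witt_equiv b (diagf (flatten [seq foldr dtensor [:: 1] f | f <- fs])).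

End Forms.

Definition ratfun (F : fieldType) (m : nat) := {fraction {mpoly F[m]}}.

Definition indet (F : fieldType) (m k : nat) : ratfun F m :=
  if insub k is Some j then @FracField.tofrac {mpoly F[m]} 'X_j else 0.

(* The diagonal entries of b are squarefree monomials in the indeterminates, pairwise
   distinct because b is a subform of the generic Pfister form <<X, Y, Z>>_b.  Clearing
   denominators, an isotropic vector yields polynomials w_k with sum_k T^(a_k) w_k^2 = 0;
   in characteristic 2 every monomial of w_k^2 has even exponents, so the coefficient of
   T^(a_k + 2y) sees only the k-th summand and forces w_k = 0.
   For [b] in I^n: as multisets of diagonal entries,
   b _|_ <<X>> _|_ <<X>> = <<X, Y>> _|_ <<X, Z>>, and <<X>> _|_ <<X>> is metabolic in
   characteristic 2 (the diagonal is a Lagrangian). *)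

From HB Require Import structures.
From mathcomp Require Import all_boot all_order all_algebra.
From mathcomp Require Import mpoly.
From mathcomp Require Import perm zify ring.
Set Implicit Arguments. Unset Strict Implicit. Unset Printing Implicit Defensive.
Import GRing.Theory.
Local Open Scope ring_scope.

Section PfisterLists.
Variable K : fieldType.
Implicit Types (x : K) (a b c s t u : seq K).

Lemma dtensorA s t u : dtensor (dtensor s t) u = dtensor s (dtensor t u).
Proof.
rewrite /dtensor; elim: s => //= x s IH.
rewrite allpairs_cat IH allpairs_mapl map_allpairs; congr (_ ++ _).
by apply: eq_allpairs => y z; rewrite mulrA.
Qed.

Lemma dtensor1s t : dtensor [:: 1] t = t.
Proof. by rewrite /dtensor /= cats0 (eq_map (@mul1r K)) map_id. Qed.

Lemma dtensor_cons1 s t : dtensor (1 :: s) t = t ++ dtensor s t.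
Proof. by rewrite /dtensor allpairs_cons (eq_map (@mul1r K)) map_id. Qed.

Lemma perm_dtensor_cons1 s t : perm_eq (dtensor s (1 :: t)) (s ++ dtensor s t).
Proof. by rewrite /dtensor perm_allpairs_consr (eq_map (@mulr1 K)) map_id. Qed.

Lemma perm_dtensor_catr s t1 t2 :
  perm_eq (dtensor s (t1 ++ t2)) (dtensor s t1 ++ dtensor s t2).
Proof. exact/permEl/(perm_allpairs_catr _ s (fun=> t1) (fun=> t2)). Qed.

Lemma pfister_cons x a : pfister (x :: a) = pfister a ++ [seq x * y | y <- pfister a].
Proof. by rewrite [LHS]/= /dtensor /= cats0 (eq_map (@mul1r K)) map_id. Qed.

Lemma pfisterE a : pfister a = 1 :: pure_pfister a.
Proof. by rewrite /pure_pfister; elim: a => // x a IH; rewrite pfister_cons IH. Qed.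

Lemma size_pfister a : size (pfister a) = (2 ^ size a)%N.
Proof.
by elim: a => // x a IH; rewrite pfister_cons size_cat size_map IH expnS mul2n addnn.
Qed.

Lemma pfister_cat a b : pfister (a ++ b) = dtensor (pfister a) (pfister b).
Proof.
elim: a => [|x a IH]; first by rewrite dtensor1s.
by rewrite cat_cons [LHS]/= -/(pfister _) IH -dtensorA.
Qed.

Lemma pfister_neq0 a : 0 \notin a -> 0 \notin pfister a.
Proof.
elim: a => [_|x a IH]; first by rewrite inE eq_sym oner_eq0.
rewrite inE negb_or eq_sym => /andP[x0 /IH a0].
rewrite pfister_cons mem_cat negb_or a0 /=; apply/mapP => -[y ya /esym/eqP].
by rewrite mulf_eq0 (negbTE x0) /=; apply/negP; apply: contraNN a0 => /eqP <-.
Qed.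

Lemma perm_pfister_cat_pure a b c :
  perm_eq (dtensor (pfister a) (pure_pfister b ++ pure_pfister c) ++ (pfister a ++ pfister a))
          (pfister (a ++ b) ++ pfister (a ++ c)).
Proof.
rewrite !pfister_cat (pfisterE b) (pfisterE c); apply/seq.permP => f.
rewrite !count_cat (seq.permP (perm_dtensor_catr _ _ _) f) (seq.permP (perm_dtensor_cons1 _ _) f).
rewrite (seq.permP (perm_dtensor_cons1 _ _) f) !count_cat; lia.
Qed.

Lemma perm_pfister_cat3 a b c :
  perm_eq (dtensor (pfister a) (pure_pfister b ++ pure_pfister c) ++
             dtensor (pfister a) (1 :: dtensor (pure_pfister b) (pure_pfister c)))
          (pfister (a ++ b ++ c)).
Proof.
rewrite !pfister_cat (pfisterE b) (pfisterE c).
set b' := pure_pfister b; set c' := pure_pfister c.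
have split_bc : perm_eq ((b' ++ c') ++ 1 :: dtensor b' c') (dtensor (1 :: b') (1 :: c')).
  apply/seq.permP => f; rewrite dtensor_cons1 !count_cat.
  by rewrite (seq.permP (perm_dtensor_cons1 _ _) f) /= !count_cat /=; lia.
rewrite perm_sym; apply: perm_trans (perm_dtensor_catr _ _ _).
by rewrite perm_sym (perm_allpairs _ (perm_refl _) split_bc).
Qed.

End PfisterLists.

Section DiagonalForms.
Variable K : fieldType.
Implicit Types (s t u : seq K) (b : bform K).

Definition diag_gram b s : Prop :=
  size s = bdim b /\ forall i j, bmx b i j = (i == j)%:R * s`_i.

Lemma diag_gram_diagf s : diag_gram (diagf s) s.
Proof. by split=> // i j; rewrite !mxE mulr_natl. Qed.

Lemma diag_gram_bsum b1 b2 s1 s2 :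
  diag_gram b1 s1 -> diag_gram b2 s2 -> diag_gram (bsum b1 b2) (s1 ++ s2).
Proof.
move=> [s1E A1E] [s2E A2E]; split; first by rewrite size_cat s1E s2E.
move=> i j; case: (split_ordP i) => i' ->; case: (split_ordP j) => j' ->.
- by rewrite block_mxEul A1E eq_lshift nth_cat s1E /= ltn_ord.
- by rewrite block_mxEur mxE eq_lrshift mul0r.
- by rewrite block_mxEdl mxE eq_rlshift mul0r.
- by rewrite block_mxEdr A2E eq_rshift nth_cat s1E /= ltnNge leq_addr addKn.
Qed.

Lemma isometric_diag_gram_perm b1 b2 s1 s2 :
  diag_gram b1 s1 -> diag_gram b2 s2 -> perm_eq s1 s2 -> isometric b1 b2.
Proof.
case: b1 b2 => d1 A1 [d2 A2] [/= s1E A1E] [/= s2E A2E] s12.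
subst d1; have {s2E} e : d2 = size s1 by rewrite -s2E (perm_size s12).
subst d2; have /tuple_permP[p s2p] : perm_eq s2 (in_tuple s1) by rewrite perm_sym.
have s2_nth (i : 'I_(size s1)) : s2`_i = s1`_(p i).
  by rewrite s2p /= (nth_map i) ?size_enum_ord // nth_ord_enum (tnth_nth 0).
exists (perm_mx p^-1); rewrite row_free_unit row_full_unit unitmx_perm; split=> //=.
rewrite tr_perm_mx invgK -row_permE -col_permE; apply/matrixP => i j.
by rewrite !mxE A1E A2E (inj_eq perm_inj) s2_nth.
Qed.

Lemma nondeg_diagf s : 0 \notin s -> nondeg (diagf s).
Proof.
move=> s0; rewrite /nondeg /= tr_diag_mx eqxx det_diag.
by apply/prodf_neq0 => i _; rewrite mxE; apply: contraNneq s0 => <-; apply: mem_nth.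
Qed.

Lemma nondeg_bsum b1 b2 : nondeg b1 -> nondeg b2 -> nondeg (bsum b1 b2).
Proof.
rewrite /nondeg /= => /andP[/eqP t1 d1] /andP[/eqP t2 d2].
by rewrite tr_block_mx t1 t2 !trmx0 eqxx det_ublock mulf_neq0.
Qed.

Lemma metabolic_bsum_self b : 2%N \in [pchar K] -> nondeg b -> metabolic (bsum b b).
Proof.
move=> pcharK2 nb; split; first exact: nondeg_bsum.
exists (bdim b), (row_mx 1%:M 1%:M); split; rewrite /= ?addnn //.
  by apply/row_freeP; exists (col_mx 1%:M 0); rewrite mul_row_col mulmx1 mulmx0 addr0.
rewrite mul_row_block !mulmx0 !mul1mx addr0 add0r tr_row_mx !trmx1 mul_row_col !mulmx1.
by apply/matrixP => i j; rewrite !mxE addrr_pchar2.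
Qed.

Lemma metabolic_diagf_nil : metabolic (diagf [::] : bform K).
Proof.
split; first exact: nondeg_diagf.
by exists 0%N, 0; rewrite /row_free mxrank0 !mul0mx.
Qed.

Lemma witt_equiv_diagf_cancel s t u : 2%N \in [pchar K] -> 0 \notin u ->
  perm_eq (s ++ (u ++ u)) t -> witt_equiv (diagf s) (diagf t).
Proof.
move=> pcharK2 u0 stu; exists (bsum (diagf u) (diagf u)), (diagf [::]).
split; first exact/metabolic_bsum_self/nondeg_diagf.
split; first exact: metabolic_diagf_nil.
apply: (isometric_diag_gram_perm (s1 := s ++ (u ++ u)) (s2 := t ++ [::])); last by rewrite cats0.
all: by do ![apply: diag_gram_bsum | apply: diag_gram_diagf].
Qed.

Lemma in_In_dtensor_pure n (a b c : seq K) : 2%N \in [pchar K] -> 0 \notin a ++ b ++ c ->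
  size (a ++ b) = n -> size (a ++ c) = n ->
  in_In n (diagf (dtensor (pfister a) (pure_pfister b ++ pure_pfister c))).
Proof.
move=> pcharK2 abc0 sab sac.
have factors_ok l : {subset l <= a ++ b ++ c} ->
    forall g, g \in [seq [:: 1; x] | x <- l] -> ~~ odd (size g) /\ all (fun x => x != 0) g.
  move=> lsub _ /mapP[x /lsub xl ->]; have x0 : x != 0 by apply: contraNneq abc0 => <-.
  split; first by [].
  by apply/allP => y; rewrite !inE => /orP[] /eqP ->; [exact: oner_neq0 | exact: x0].
exists [:: [seq [:: 1; x] | x <- a ++ b]; [seq [:: 1; x] | x <- a ++ c]]; split.
  move=> f; rewrite !inE => /orP[]/eqP->; rewrite size_map; split=> //; apply: factors_ok;
    by move=> x; rewrite !mem_cat => /orP[]->; rewrite ?orbT.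
have pfister_foldr l : foldr (@dtensor _) [:: 1] [seq [:: 1; x] | x <- l] = pfister l.
  by rewrite foldr_map.
rewrite /= !pfister_foldr cats0.
apply: witt_equiv_diagf_cancel pcharK2 _ (perm_pfister_cat_pure _ _ _).
by apply: pfister_neq0; apply: contra abc0; rewrite mem_cat => ->.
Qed.

End DiagonalForms.

Section FractionField.
Variable R : idomainType.
Local Notation tofrac := (@FracField.tofrac R).

(* The library has no numerator/denominator decomposition, so unfold the quotient. *)
Lemma tofrac_quotient (x : {fraction R}) :
  exists2 d : R, d != 0 & exists n : R, x = tofrac n / tofrac d.
Proof.
exists (\d_(generic_quotient.repr x)); first exact: denom_ratioP.
exists (\n_(generic_quotient.repr x)).
rewrite -[x in LHS]reprK; unlock FracField.tofrac; rewrite /GRing.inv /GRing.mul /=.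
rewrite -(FracField.pi_inv (Ratio _ 1)) -FracField.pi_mul /FracField.invf /FracField.mulf /=.
by rewrite !numden_Ratio ?oner_neq0 ?denom_ratioP // mulr1 mul1r Ratio_numden.
Qed.

Lemma tofrac_common_denominator (I : finType) (v : I -> {fraction R}) :
  exists2 d : R, d != 0 & exists w : I -> R, forall i, tofrac d * v i = tofrac (w i).
Proof.
have /fin_all_exists[f vf] i : exists f : R * R, f.2 != 0 /\ v i = tofrac f.1 / tofrac f.2.
  by have [d d0 [n ->]] := tofrac_quotient (v i); exists (n, d).
exists (\prod_i (f i).2); first by apply/prodf_neq0 => i _; case: (vf i).
exists (fun i => (f i).1 * \prod_(j | j != i) (f j).2) => i.
have [fi0 ->] := vf i; rewrite (bigD1 i) //= !tofracM.
by rewrite mulrAC mulrCA divff ?mulr1 ?tofrac_eq0.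
Qed.

Lemma anisotropic_diagf_tofrac (s : seq {fraction R}) (a : 'I_(size s) -> R) :
  (forall k : 'I_(size s), s`_k = tofrac (a k)) ->
  (forall w : 'I_(size s) -> R, \sum_k a k * w k ^+ 2 = 0 -> forall k, w k = 0) ->
  anisotropic (diagf s).
Proof.
move=> sE a_aniso v; apply: contra_neq => vv0.
have [d d0 [w vw]] := tofrac_common_denominator (fun k => v 0 k).
have vvE : bval v v = \sum_(k < size s) s`_k * v 0 k ^+ 2.
  by rewrite /bval mul_mx_diag !mxE; apply: eq_bigr => k _; rewrite !mxE; ring.
have w0 : forall k, w k = 0.
  apply: a_aniso; apply/eqP; rewrite -tofrac_eq0 rmorph_sum /=.
  rewrite (eq_bigr (fun k : 'I_(size s) => tofrac d ^+ 2 * (s`_k * v 0 k ^+ 2))) => [|k _].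
    by rewrite -mulr_sumr -vvE vv0 mulr0.
  by rewrite tofracM tofracXn -vw sE; ring.
apply/rowP => k; rewrite mxE; have := vw k; rewrite w0 tofrac0 => /eqP.
by rewrite mulf_eq0 tofrac_eq0 (negbTE d0) => /eqP.
Qed.

End FractionField.

Section Monomials.
Variables (F : fieldType) (m : nat).
Local Notation K := (ratfun F m).

Lemma addm_sqfree_double_eq (a b x y : 'X_{1..m}) :
  (forall j, a j <= 1)%N -> (forall j, b j <= 1)%N ->
  (a + x *+ 2 == b + y *+ 2)%MM = (a == b) && (x == y).
Proof.
move=> ha hb; apply/eqP/andP => [/mnmP e | [/eqP-> /eqP->] //].
by split; apply/eqP/mnmP => j; have := e j; rewrite !mnmDE; have := ha j; have := hb j; lia.
Qed.

Definition monomial (a : 'X_{1..m}) : K := FracField.tofrac 'X_[a].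

Lemma monomialD a b : monomial (a + b) = monomial a * monomial b.
Proof. by rewrite /monomial mpolyXD tofracM. Qed.

Lemma monomial0 : monomial 0 = 1.
Proof. by rewrite /monomial mpolyX0 tofrac1. Qed.

Lemma monomial_inj : injective monomial.
Proof.
move=> a b /eqP; rewrite tofrac_eq => /eqP /(congr1 (mcoeff b)).
by rewrite !mcoeffX eqxx; case: eqP => // _ /esym/eqP; rewrite oner_eq0.
Qed.

Lemma monomial_neq0 a : monomial a != 0.
Proof.
rewrite tofrac_eq0; apply/eqP => /(congr1 (mcoeff a)).
by rewrite mcoeffX eqxx mcoeff0 => /eqP; rewrite oner_eq0.
Qed.

Lemma indet_monomial (j : 'I_m) : indet F m j = monomial U_(j).
Proof. by rewrite /indet valK. Qed.

Lemma pfister_indet (ks : seq 'I_m) : uniq ks ->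
  uniq (pfister [seq indet F m j | j : 'I_m <- ks]) /\
  forall x, x \in pfister [seq indet F m j | j : 'I_m <- ks] ->
    exists2 a, x = monomial a & forall j, (a j <= (j \in ks))%N.
Proof.
elim: ks => [_|k ks IH].
  split=> // x; rewrite inE => /eqP->.
  by exists 0%MM => [|j]; rewrite ?monomial0 ?mnm0E.
rewrite cons_uniq => /andP[kks /IH[uniq_p mon_p]]; rewrite map_cons pfister_cons.
set p := pfister _.
have mon_kp x : x \in p -> exists2 a, indet F m k * x = monomial a &
    (a k = 1)%N /\ forall j, (a j <= (j \in k :: ks))%N.
  move=> /mon_p[a -> ha]; exists (U_(k) + a)%MM; first by rewrite indet_monomial monomialD.
  have ak : a k = 0%N by have := ha k; rewrite (negbTE kks); lia.
  split=> [|j]; first by rewrite mnmDE mnm1E eqxx ak.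
  rewrite mnmDE mnm1E inE eq_sym; have := ha j.
  by case: (eqVneq j k) => [->|] /=; rewrite ?ak //; case: (j \in ks).
split.
  have k0 : indet F m k != 0 by rewrite indet_monomial monomial_neq0.
  rewrite cat_uniq uniq_p (map_inj_uniq (mulfI k0)) uniq_p andbT /=.
  apply/hasPn => _ /mapP[y /mon_kp[a aE [ak _]] ->].
  apply/negP => /mon_p[b]; rewrite aE => /monomial_inj <-.
  by move=> /(_ k); rewrite ak (negbTE kks).
move=> x; rewrite mem_cat => /orP[/mon_p[a -> ha] | /mapP[y /mon_kp[a aE [_ ha]] ->]].
  exists a => // j; rewrite inE; case: (j == k) => /=; last exact: ha.
  exact: leq_trans (ha j) (leq_b1 _).
by exists a.
Qed.

Lemma indets_neq0 (ks : seq 'I_m) : 0 \notin [seq indet F m j | j : 'I_m <- ks].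
Proof. by apply/mapP => -[j _ /esym/eqP]; rewrite indet_monomial (negbTE (monomial_neq0 _)). Qed.

Lemma sub_pfister_indets (s r : seq K) :
  perm_eq (s ++ r) (pfister [seq indet F m j | j : 'I_m <- enum 'I_m]) ->
  uniq s /\ forall x, x \in s -> exists2 a, x = monomial a & forall j, (a j <= 1)%N.
Proof.
move=> sr; have [uniq_p mon_p] := pfister_indet (enum_uniq 'I_m).
split; first by move: uniq_p; rewrite -(perm_uniq sr) cat_uniq => /andP[].
move=> x xs; have [|a -> ha] := mon_p x; first by rewrite -(perm_mem sr) mem_cat xs.
by exists a => // j; apply: leq_trans (ha j) (leq_b1 _).
Qed.

End Monomials.

Section Pchar2.
Variables (F : fieldType) (m : nat).
Hypothesis pcharF2 : 2%N \in [pchar F].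
Local Notation R := {mpoly F[m]}.
Local Notation K := (ratfun F m).
Local Notation monomial := (@monomial F m).

Lemma mpoly_pchar2 : 2%N \in [pchar R].
Proof. by rewrite pchar_lalg. Qed.

Lemma ratfun_pchar2 : 2%N \in [pchar K].
Proof. exact: (rmorph_pchar (@FracField.tofrac R) mpoly_pchar2). Qed.

Lemma sqr_mpolyE (w : R) : w ^+ 2 = \sum_(x <- msupp w) (w@_x) ^+ 2 *: 'X_[x *+ 2].
Proof.
rewrite -[w ^+ 2]/(pFrobenius_aut mpoly_pchar2 w) {1}[w]mpolyE rmorph_sum.
by apply: eq_bigr => x _; rewrite -[LHS]/((_ *: 'X_[x]) ^+ 2) exprZn mpolyXn.
Qed.

Lemma mcoeff_mulX_sqr (a b y : 'X_{1..m}) (w : R) :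
  (forall j, a j <= 1)%N -> (forall j, b j <= 1)%N ->
  ('X_[b] * w ^+ 2)@_(a + y *+ 2) = (b == a)%:R * (w@_y) ^+ 2.
Proof.
move=> ha hb; rewrite sqr_mpolyE mulr_sumr raddf_sum /=.
under eq_bigr do rewrite -scalerAr -mpolyXD mcoeffZ mcoeffX addm_sqfree_double_eq //.
have [_ | _] := eqVneq b a; last by rewrite mul0r big1 // => x _; rewrite mulr0.
rewrite mul1r; have [yw | yw] := boolP (y \in msupp w).
  rewrite (bigD1_seq y) ?msupp_uniq //= eqxx mulr1 big1 ?addr0 // => x /negbTE xy.
  by rewrite xy mulr0.
have /eqP-> : w@_y == 0 by rewrite mcoeff_eq0.
rewrite expr0n /= big1_seq // => x /andP[_ xw].
by rewrite (_ : x == y = false) ?mulr0 //; apply: contraNF yw => /eqP <-.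
Qed.

Lemma sum_sqfree_sqr_eq0 N (a : 'I_N -> 'X_{1..m}) (w : 'I_N -> R) :
  injective a -> (forall k j, a k j <= 1)%N ->
  \sum_k 'X_[a k] * w k ^+ 2 = 0 -> forall k, w k = 0.
Proof.
move=> inj_a sqf_a sum0 k; apply/eqP; apply: contraT => wk0.
have [y yw] : exists y, y \in msupp (w k).
  case E: (msupp (w k)) => [|y ys]; last by exists y; rewrite mem_head.
  by move: wk0; rewrite -msupp_eq0 E.
have := congr1 (mcoeff (a k + y *+ 2)) sum0; rewrite raddf_sum mcoeff0 /=.
under eq_bigr do rewrite mcoeff_mulX_sqr //.
rewrite (bigD1 k) //= eqxx mul1r big1 ?addr0 => [/eqP | j /negbTE jk].
  by rewrite sqrf_eq0 mcoeff_eq0 yw.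
by rewrite (inj_eq inj_a) jk mul0r.
Qed.

Lemma anisotropic_diagf_monomials (s : seq K) : uniq s ->
  (forall x, x \in s -> exists2 a, x = monomial a & forall j, a j <= 1)%N ->
  anisotropic (diagf s).
Proof.
move=> us mon_s.
have /fin_all_exists2[a sa sqf_a] (k : 'I_(size s)) :
    exists2 a, s`_k = monomial a & forall j, (a j <= 1)%N.
  exact/mon_s/mem_nth.
apply: (anisotropic_diagf_tofrac (a := fun k => 'X_[a k])) => // w.
apply: sum_sqfree_sqr_eq0 => // k1 k2 a12; apply/ord_inj/eqP.
by rewrite -(nth_uniq (0 : K) _ _ us) // !sa a12.
Qed.

End Pchar2.

Lemma map_iota_shift (T : Type) (f : nat -> T) a c l :
  [seq f (c + (k - a))%N | k <- iota a l] = [seq f k | k <- iota c l].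
Proof.
elim: l a c => //= l IH a c; rewrite subnn addn0 -(IH a.+1); congr (_ :: _).
by apply/eq_in_map => k; rewrite mem_iota => /andP[ak _]; congr f; lia.
Qed.

Lemma map_iota_split3 (T : Type) (f : nat -> T) i p l :
  [seq f k.-1 | k <- iota 1 p] ++ [seq f (p + (k - i))%N | k <- iota i l] ++
    [seq f (p + l + (k - i))%N | k <- iota i l] = [seq f k | k <- iota 0 (p + l + l)].
Proof.
rewrite !iotaD !add0n -catA !map_cat !map_iota_shift; congr (_ ++ _).
by rewrite -(map_iota_shift f 1 0); apply: eq_map => k; rewrite add0n subn1.
Qed.

Lemma pfister_dim_arith i n : (0 < i)%N -> (i <= n)%N ->
  (2 ^ i.-1 * ((2 ^ (n - i).+1).-1 + (2 ^ (n - i).+1).-1) = 2 ^ n.+1 - 2 ^ i)%N.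
Proof.
case: i => // e _ le_en; have [l nE] : exists l, n = (e + l)%N by exists (n - e)%N; lia.
subst n.
rewrite (_ : (e + l - e.+1).+1 = l) /=; last by lia.
rewrite !expnS expnD; have : (0 < 2 ^ l)%N by rewrite expn_gt0.
move: (2 ^ e)%N (2 ^ l)%N => x y; nia.
Qed.

Theorem lemma4p4 (F : fieldType) (hF : 2%N \in [pchar F]) (i n : nat)
    (hi : (0 < i)%N) (hin : (i <= n)%N) :
  let m := (i.-1 + (n - i).+1 + (n - i).+1)%N in
  let T := indet F m in
  let Xs := [seq T k.-1 | k <- iota 1 i.-1] in
  let Ys := [seq T (i.-1 + (k - i))%N | k <- iota i (n - i).+1] in
  let Zs := [seq T (i.-1 + (n - i).+1 + (k - i))%N | k <- iota i (n - i).+1] in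
  let b := diagf (dtensor (pfister Xs) (pure_pfister Ys ++ pure_pfister Zs)) in
  [/\ nondeg b, anisotropic b, bdim b = (2 ^ n.+1 - 2 ^ i)%N & in_In n b].
Proof.
move=> m T Xs Ys Zs b.
have XYZ : Xs ++ Ys ++ Zs = [seq T j | j : 'I_m <- enum 'I_m].
  by rewrite (map_comp T val) val_enum_ord; apply: map_iota_split3.
have := perm_pfister_cat3 Xs Ys Zs; rewrite XYZ => /sub_pfister_indets[uniq_b mon_b].
split.
- apply: nondeg_diagf; apply/negP => /mon_b[a /esym/eqP].
  by rewrite (negbTE (monomial_neq0 _ _)).
- exact: anisotropic_diagf_monomials.
- rewrite /= size_allpairs size_cat /pure_pfister !size_behead !size_pfister !size_map.
  by rewrite !size_iota pfister_dim_arith.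
- apply: in_In_dtensor_pure (ratfun_pchar2 m hF) _ _ _; first by rewrite XYZ indets_neq0.
  all: by rewrite size_cat !size_map !size_iota; lia.
Qed.
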